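(* For $n\geq 1$, $$\sum_{\pi\in\mathfrak{S}_n(2413,3142)}t^{\mathrm{des}(\pi)}=\sum_{T\in \mathfrak{D}\mathfrak{T}_n} t^{n_\ominus(T)}.$$
   Context: $\mathfrak{S}_n(2413,3142)$ is the set of permutations of $[n]$ avoiding the patterns $2413$ and $3142$; $\mathrm{des}(\pi)=\#\{i\in[n-1]:\pi_i>\pi_{i+1}\}$. A binary tree is either empty or consists of a root together with a left subtree and a right subtree, both binary trees. A right chain of a binary tree is a maximal sequence of nodes $v_1,\dots,v_l$ in which $v_1$ is either the root or a left child and each $v_{j+1}$ is the right child of $v_j$. A di-sk tree is a binary tree whose nodes are labelled $\oplus$ or $\ominus$ such that along every right chain the labels alternate. $\mathfrak{D}\mathfrak{T}_n$ is the set of di-sk trees with $n-1$ nodes (for $n=1$ only the empty tree), and $n_\ominus(T)$ is the number of nodes labelled $\ominus$. *)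

From HB Require Import structures.
From mathcomp Require Import all_boot all_order all_algebra all_fingroup.
Set Implicit Arguments. Unset Strict Implicit. Unset Printing Implicit Defensive.

Definition contains2413 n (p : 'S_n) : bool :=
  [exists a : 'I_n, exists b : 'I_n, exists c : 'I_n, exists d : 'I_n,
     [&& a < b, b < c, c < d, p c < p a, p a < p d & p d < p b]].

Definition contains3142 n (p : 'S_n) : bool :=
  [exists a : 'I_n, exists b : 'I_n, exists c : 'I_n, exists d : 'I_n,
     [&& a < b, b < c, c < d, p b < p d, p d < p a & p a < p c]].

Definition avoids_2413_3142 n (p : 'S_n) : bool :=
  ~~ contains2413 p && ~~ contains3142 p.

Definition des n (p : 'S_n) : nat :=
  #|[set i : 'I_n | [exists j : 'I_n, (val j == (val i).+1) && (p j < p i)]]|.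

(* binary trees whose nodes carry a label: true = ominus, false = oplus *)
Inductive btree : Type :=
| Leaf : btree
| Node : btree -> bool -> btree -> btree.

Fixpoint nnodes (t : btree) : nat :=
  match t with Leaf => 0 | Node l _ r => (nnodes l + nnodes r).+1 end.

Fixpoint n_ominus (t : btree) : nat :=
  match t with Leaf => 0 | Node l a r => (n_ominus l + n_ominus r + a) end.

(* labels alternate along every right chain, i.e. every node and its
   right child carry different labels *)
Fixpoint is_disk (t : btree) : bool :=
  match t with
  | Leaf => true
  | Node l a r =>
      [&& is_disk l, is_disk r &
          match r with Leaf => true | Node _ b _ => a != b end]
  end.

(* all labelled binary trees with exactly k nodes (fuel f >= k) *)
Fixpoint trees_fuel (f k : nat) : seq btree :=
  match f with
  | 0 => if k is 0 then [:: Leaf] else [::]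
  | f'.+1 =>
      match k with
      | 0 => [:: Leaf]
      | k'.+1 =>
          flatten [seq flatten [seq flatten [seq [seq Node l a r | r <- trees_fuel f' (k' - i)]
                                             | a <- [:: false; true]]
                                | l <- trees_fuel f' i]
                  | i <- iota 0 k]
      end
  end.

Definition all_trees (k : nat) : seq btree := trees_fuel k k.

Definition disk_trees (n : nat) : seq btree := [seq t <- all_trees n.-1 | is_disk t].

Example trees_count : [seq size (all_trees k) | k <- iota 0 5] = [:: 1; 2; 8; 40; 224]%N.
Proof. by vm_compute. Qed.
Example all_sizes : all (fun k => all (fun t => nnodes t == k) (all_trees k)) (iota 0 5).
Proof. by vm_compute. Qed.
Example disk_count : [seq size (disk_trees k) | k <- iota 1 5] = [:: 1; 2; 6; 22; 90]%N.
Proof. by vm_compute. Qed.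

From HB Require Import structures.
From mathcomp Require Import all_boot all_order all_algebra all_fingroup.
From mathcomp Require Import zify.

Set Implicit Arguments.
Unset Strict Implicit.
Unset Printing Implicit Defensive.

(* A permutation avoids 2413 and 3142 (is separable) exactly when it is built
   from the one-point permutation by direct sums p (+) q and skew sums p (-) q.
   Read a labelled binary tree as such an expression, an ominus node being a
   skew sum: a skew sum creates exactly one descent, at the junction, and a
   direct sum none, so descents count ominus nodes.  Conversely, adding entries
   one at a time shows that every separable permutation of length at least two
   splits as a direct or a skew sum.  Splitting at the rightmost cut of that
   kind forbids a cut of the same kind in the right summand, which is the
   alternation of labels along right chains, and it makes the splitting
   unique: di-sk trees with n - 1 nodes are in bijection with separable
   permutations of length n, and the bijection maps ominus nodes to descents. *)

Definition occurs (R : nat -> nat -> nat -> nat -> bool) (s : seq nat) :=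
  exists a b c d, [/\ a < b, b < c, c < d, d < size s &
    R (nth 0 s a) (nth 0 s b) (nth 0 s c) (nth 0 s d)].

Definition pat2413 (x y z w : nat) := [&& z < x, x < w & w < y].
Definition pat3142 (x y z w : nat) := [&& y < w, w < x & x < z].

Definition separable (s : seq nat) := ~ occurs pat2413 s /\ ~ occurs pat3142 s.

Lemma occurs_map (f : nat -> nat) (R R' : nat -> nat -> nat -> nat -> bool)
    (s : seq nat) :
    (forall x y z w, x \in s -> y \in s -> z \in s -> w \in s ->
       R (f x) (f y) (f z) (f w) = R' x y z w) ->
  occurs R (map f s) <-> occurs R' s.
Proof.
move=> fR; rewrite /occurs size_map.
split=> -[a [b [c [d [ab bc cd ds Rabcd]]]]]; exists a, b, c, d; split=> //.
all: have [ad bd] : a < size s /\ b < size s by lia.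
all: have cs : c < size s by lia.
all: by move: Rabcd; rewrite !(nth_map 0) // fR // mem_nth.
Qed.

Lemma occurs_take R k (s : seq nat) : occurs R (take k s) -> occurs R s.
Proof.
move=> [a [b [c [d [ab bc cd]]]]]; rewrite size_take_min => ds.
have [dk dsz] : d < k /\ d < size s by lia.
by rewrite !nth_take; try lia; exists a, b, c, d.
Qed.

Lemma occurs_drop R k (s : seq nat) : occurs R (drop k s) -> occurs R s.
Proof.
move=> [a [b [c [d [ab bc cd]]]]]; rewrite size_drop !nth_drop => ds.
by exists (k + a), (k + b), (k + c), (k + d); split; lia.
Qed.

Lemma separable_take k s : separable s -> separable (take k s).
Proof. by case=> h1 h2; split=> /occurs_take. Qed.

Lemma separable_drop k s : separable s -> separable (drop k s).
Proof. by case=> h1 h2; split=> /occurs_drop. Qed.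

Lemma separable_mono (f : nat -> nat) (s : seq nat) :
  {in s &, {mono f : x y / x < y}} -> separable (map f s) <-> separable s.
Proof.
move=> fmono.
have E2413 : occurs pat2413 (map f s) <-> occurs pat2413 s.
  by apply: occurs_map => x y z w xs ys zs ws; rewrite /pat2413 !fmono.
have E3142 : occurs pat3142 (map f s) <-> occurs pat3142 s.
  by apply: occurs_map => x y z w xs ys zs ws; rewrite /pat3142 !fmono.
by rewrite /separable E2413 E3142.
Qed.

Lemma separable_antimono (f : nat -> nat) (s : seq nat) :
  {in s &, {mono f : x y /~ x < y}} -> separable (map f s) <-> separable s.
Proof.
move=> fmono.
have E2413 : occurs pat2413 (map f s) <-> occurs pat3142 s.
  apply: occurs_map => x y z w xs ys zs ws; rewrite /pat2413 /pat3142 !fmono //.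
  by case: (x < z) (w < x) (y < w) => [] [] [].
have E3142 : occurs pat3142 (map f s) <-> occurs pat2413 s.
  apply: occurs_map => x y z w xs ys zs ws; rewrite /pat2413 /pat3142 !fmono //.
  by case: (w < y) (x < w) (z < x) => [] [] [].
by rewrite /separable E2413 E3142; tauto.
Qed.

Definition cut (r : rel nat) (s : seq nat) k := allrel r (take k s) (drop k s).

Definition decomposable (s : seq nat) :=
  exists2 k, 0 < k < size s & cut ltn s k || cut gtn s k.

Lemma cutP (r : rel nat) (s : seq nat) k :
  reflect (forall i j, i < k <= j -> j < size s -> r (nth 0 s i) (nth 0 s j))
          (cut r s k).
Proof.
apply: (iffP allrelP) => [rs i j /andP[ik kj] js |
                          rs _ _ /nthP-/(_ 0)[i + <-] /nthP-/(_ 0)[j + <-]].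
  have i_s : i < size s := leq_trans ik (leq_trans kj (ltnW js)).
  rewrite -(nth_take 0 ik) -(subnKC kj) -nth_drop; apply: rs; apply: mem_nth.
    by rewrite size_take_min leq_min ik.
  by rewrite size_drop (ltn_sub2r (leq_ltn_trans kj js) js).
rewrite size_take_min leq_min size_drop => /andP[ik i_s] js.
rewrite nth_take ?nth_drop //; apply: rs; rewrite ?ik ?leq_addr //=.
by rewrite -ltn_subRL.
Qed.

Lemma cut_map (f : nat -> nat) (r r' : rel nat) s k :
  {in s &, forall x y, r (f x) (f y) = r' x y} -> cut r (map f s) k = cut r' s k.
Proof.
move=> fr; rewrite /cut -map_take -map_drop allrel_mapl allrel_mapr.
by apply: (eq_in_allrel (P := mem s) (Q := mem s)) => //; apply/allP => y;
  [apply: mem_take | apply: mem_drop].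
Qed.

Lemma cut_cat (r : rel nat) (a b : seq nat) k :
  size a = k -> cut r (a ++ b) k = allrel r a b.
Proof. by move=> <-; rewrite /cut take_size_cat // drop_size_cat. Qed.

Lemma cut_drop (r : rel nat) (s : seq nat) k1 k2 :
  cut r s k2 -> k1 <= k2 -> cut r (drop k1 s) (k2 - k1).
Proof.
move=> /cutP rs k12; apply/cutP => i j /andP[ik kj]; rewrite size_drop => js.
by rewrite !nth_drop; apply: rs; lia.
Qed.

Lemma cut_dropD (r : rel nat) (s : seq nat) K k :
  cut r s K -> cut r (drop K s) k -> cut r s (K + k).
Proof.
move=> /cutP rK /cutP rk; apply/cutP => i j /andP[ik kj] js.
have [iK | Ki] := ltnP i K; first by apply: rK; lia.
have := rk (i - K) (j - K); rewrite !nth_drop !subnKC //; try lia.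
by apply; rewrite ?size_drop; lia.
Qed.

Lemma opposite_cuts (s : seq nat) i j :
  0 < i < size s -> 0 < j < size s -> cut ltn s i -> cut gtn s j -> False.
Proof.
move=> i_s j_s /cutP lt_i /cutP gt_j.
have := lt_i 0 (size s).-1; have := gt_j 0 (size s).-1; rewrite /=; lia.
Qed.

Lemma occurs_split R (s : seq nat) k :
    occurs R s -> ~ occurs R (take k s) -> ~ occurs R (drop k s) ->
  exists a b c d, [/\ a < b, b < c, c < d, d < size s &
    R (nth 0 s a) (nth 0 s b) (nth 0 s c) (nth 0 s d)] /\ a < k <= d.
Proof.
move=> [a [b [c [d [ab bc cd ds Rabcd]]]]] no_take no_drop.
exists a, b, c, d; split=> //; apply/andP; split.
  rewrite ltnNge; apply/negP => ka; apply: no_drop.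
  exists (a - k), (b - k), (c - k), (d - k).
  rewrite size_drop !nth_drop !subnKC //; try lia.
  by split=> //; lia.
rewrite leqNgt; apply/negP => dk; apply: no_take.
exists a, b, c, d; rewrite size_take_min !nth_take //; try lia.
by split=> //; lia.
Qed.

Lemma separable_cat (s : seq nat) k :
    cut ltn s k || cut gtn s k -> separable (take k s) -> separable (drop k s) ->
  separable s.
Proof.
move=> cut_k [t2413 t3142] [d2413 d3142]; split.
  move=> /occurs_split/(_ t2413 d2413) [a [b [c [d [[ab bc cd ds]]]]]].
  rewrite /pat2413 => /and3P[] + + + /andP[ak kd].
  case/orP: cut_k => /cutP/= cut_k.
    by have := cut_k a c; have := cut_k b c; have := cut_k b d; lia.
  by have := cut_k a b; have := cut_k a d; have := cut_k c d; lia.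
move=> /occurs_split/(_ t3142 d3142) [a [b [c [d [[ab bc cd ds]]]]]].
rewrite /pat3142 => /and3P[] + + + /andP[ak kd].
case/orP: cut_k => /cutP/= cut_k.
  by have := cut_k a b; have := cut_k a d; have := cut_k c d; lia.
by have := cut_k a c; have := cut_k b c; have := cut_k b d; lia.
Qed.

(** * Separable sequences are decomposable *)

Lemma nth_rcons_lt (s : seq nat) x i : i < size s -> nth 0 (rcons s x) i = nth 0 s i.
Proof. by move=> i_s; rewrite nth_rcons i_s. Qed.

Lemma nth_rcons_size (s : seq nat) x : nth 0 (rcons s x) (size s) = x.
Proof. by rewrite nth_rcons ltnn eqxx. Qed.

Lemma no_3142_left_of_cut (s : seq nat) x k i j :
    ~ occurs pat3142 (rcons s x) -> cut ltn s k -> k < size s ->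
  i < j < k -> nth 0 s j < x < nth 0 s i -> False.
Proof.
move=> no3142 /cutP lt_k k_s ijk xij; apply: no3142.
exists i, j, k, (size s); rewrite size_rcons nth_rcons_size !nth_rcons_lt; try lia.
split; try lia; apply/and3P; split; try lia.
by apply: lt_k; lia.
Qed.

Lemma decomposable_rcons (s : seq nat) x k :
    uniq (rcons s x) -> ~ occurs pat3142 (rcons s x) -> 0 < k < size s ->
  cut ltn s k -> decomposable (rcons s x).
Proof.
rewrite rcons_uniq => /andP[x_s _] no3142 k_s lt_k.
have neq_x i : i < size s -> nth 0 s i != x.
  by move=> i_s; apply: contraNneq x_s => <-; apply: mem_nth.
have [below_k | /allPn[y y_k /= /negbTE y_x]] := boolP (all (ltn^~ x) (take k s)).
  exists k; first by rewrite size_rcons; lia.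
  rewrite /cut -cats1 takel_cat ?drop_cat; try lia.
  rewrite ifT; try lia.
  by rewrite allrel_catr allrel1r below_k andbT; apply/orP; left.
have [above_all | not_above] := boolP (all (gtn^~ x) s).
  exists (size s); first by rewrite size_rcons; lia.
  by rewrite -cats1 !cut_cat // !allrel1r above_all orbT.
(* Otherwise the left block is cut again before its first entry above [x]. *)
have [l l_s s_l] : exists2 l, l < size s & nth 0 s l < x.
  move: not_above => /allPn[z /nthP-/(_ 0)[l l_s <-] /= l_x]; exists l => //.
  by rewrite ltn_neqAle neq_x // leqNgt.
have x_y : x < y.
  have y_neq : y != x by apply: contraNneq x_s => <-; exact: mem_take y_k.
  by rewrite ltn_neqAle eq_sym y_neq leqNgt y_x.
pose j := find (fun y => x < y) (take k s).
have j_k : j < k.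
  have : has (fun y => x < y) (take k s) by apply/hasP; exists y.
  by rewrite has_find size_take_min leq_min => /andP[].
have x_j : x < nth 0 s j.
  by rewrite -(nth_take 0 j_k) (nth_find 0) //; apply/hasP; exists y.
have below i : i < j -> nth 0 s i < x.
  move=> i_j; have := before_find 0 i_j; rewrite nth_take; last lia.
  by have := neq_x i; lia.
have above m : j <= m < k -> x < nth 0 s m.
  case/andP; rewrite leq_eqVlt => /orP[/eqP <- // | j_m m_k].
  rewrite ltnNge leq_eqVlt negb_or neq_x /=; last lia.
  apply/negP => s_m; apply: (no_3142_left_of_cut no3142 lt_k (i := j) (j := m)); lia.
have j_pos : 0 < j.
  case: (posnP j) => // j0; exfalso; move/cutP: lt_k => lt_k.
  have [l_k|k_l] := ltnP l k; first by have := above l; lia.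
  by have /= := lt_k 0 l; rewrite j0 in x_j; lia.
exists j; first by rewrite size_rcons; lia.
apply/orP; left; apply/cutP => i m /andP[i_j j_m] /=; rewrite size_rcons ltnS leq_eqVlt.
case/orP=> [/eqP -> | m_s]; first by rewrite nth_rcons_size nth_rcons_lt ?below //; lia.
rewrite !nth_rcons_lt; try lia.
have [m_k | k_m] := ltnP m k; first by have := below i i_j; have := above m; lia.
by move/cutP: lt_k; apply; lia.
Qed.

Lemma decomposable_antimono (f : nat -> nat) (s : seq nat) :
  {in s &, {mono f : x y /~ x < y}} -> decomposable (map f s) -> decomposable s.
Proof.
move=> fmono [k k_s cut_k]; exists k; first by rewrite size_map in k_s.
by move: cut_k; rewrite (@cut_map f ltn gtn) 1?(@cut_map f gtn ltn) 1?orbC //;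
  move=> x y xs ys /=; rewrite fmono.
Qed.

Lemma subn_bigmax_antimono (s : seq nat) :
  {in s &, {mono subn (\max_(z <- s) z) : x y /~ x < y}}.
Proof.
move=> x y xs ys.
have x_max : x <= \max_(z <- s) z := @leq_bigmax_seq _ s xpredT id x xs isT.
have y_max : y <= \max_(z <- s) z := @leq_bigmax_seq _ s xpredT id y ys isT.
by apply/idP/idP; lia.
Qed.

Lemma antimono_inj (f : nat -> nat) (s : seq nat) :
  {in s &, {mono f : x y /~ x < y}} -> {in s &, injective f}.
Proof.
move=> fmono x y xs ys fxy; case: (ltngtP x y) => // [xy | yx].
  by have := fmono y x ys xs; rewrite fxy ltnn xy.
by have := fmono x y xs ys; rewrite fxy ltnn yx.
Qed.

Theorem separable_decomposable (s : seq nat) :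
  uniq s -> separable s -> 1 < size s -> decomposable s.
Proof.
elim/last_ind: s => // s x IH us ss; rewrite size_rcons ltnS => s_gt0.
have [sep_s us_s] : separable s /\ uniq s.
  move: ss us; rewrite -cats1 cat_uniq => /(separable_take (size s)).
  by rewrite take_size_cat // => ? /andP[].
have [s1 | s_gt1] := leqP (size s) 1.
  case: s s_gt0 s1 us {IH ss sep_s us_s} => [|y [|]] //= _ _; rewrite inE andbT => yx.
  exists 1 => //; rewrite /cut [take _ _]/= [drop _ _]/=.
  by rewrite !allrel1l /= !andbT -neq_ltn.
have [k k_s /orP[lt_k | gt_k]] := IH us_s sep_s s_gt1.
  exact: decomposable_rcons us ss.2 k_s lt_k.
(* A skew cut becomes a direct cut once the values are complemented. *)
pose f := subn (\max_(z <- rcons s x) z).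
have fmono : {in rcons s x &, {mono f : y z /~ y < z}} := @subn_bigmax_antimono _.
apply: (decomposable_antimono fmono); rewrite map_rcons.
apply: (decomposable_rcons (k := k)).
- by rewrite -map_rcons map_inj_in_uniq //; exact: antimono_inj fmono.
- by rewrite -map_rcons; case/(separable_antimono fmono): ss.
- by rewrite size_map.
- rewrite (@cut_map f ltn gtn) // => y z ys zs /=.
  by rewrite fmono // mem_rcons inE ?ys ?zs orbT.
Qed.

(** * Trees as iterated direct and skew sums *)

Definition cut_rel (a : bool) : rel nat := if a then gtn else ltn.

(* [Node l false r] is the direct sum and [Node l true r] the skew sum of the
   permutations of [l] and [r]; a [Leaf] is the permutation of length one. *)
Fixpoint tree_perm (t : btree) : seq nat :=
  if t is Node l a r then
    let p := tree_perm l in let q := tree_perm r in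
    map (addn (a * size q)) p ++ map (addn (~~ a * size p)) q
  else [:: 0].

Lemma size_tree_perm t : size (tree_perm t) = (nnodes t).+1.
Proof.
elim: t => //= l IHl a r IHr.
by rewrite size_cat !size_map IHl IHr addnS addSn.
Qed.

Lemma perm_map_addn_iota c (s : seq nat) n :
  perm_eq s (iota 0 n) -> perm_eq (map (addn c) s) (iota c n).
Proof. by move=> ps; rewrite -{2}[c]addn0 iotaDl; apply: perm_map. Qed.

Lemma tree_perm_iota t : perm_eq (tree_perm t) (iota 0 (nnodes t).+1).
Proof.
elim: t => [//|l IHl a r IHr]; rewrite [tree_perm _]/= [nnodes _]/= !size_tree_perm.
have -> : (nnodes l + nnodes r).+2 = (nnodes l).+1 + (nnodes r).+1.
  by rewrite addnS addSn.
case: a; rewrite [~~ _]/= mul1n mul0n.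
  rewrite addnC iotaD add0n perm_catC.
  by apply: perm_cat; apply: perm_map_addn_iota.
by rewrite iotaD add0n; apply: perm_cat; apply: perm_map_addn_iota.
Qed.

Lemma mem_tree_perm t x : x \in tree_perm t -> x < size (tree_perm t).
Proof. by rewrite (perm_mem (tree_perm_iota t)) mem_iota size_tree_perm. Qed.

Lemma cut_rel_addn a c (s : seq nat) k :
  cut (cut_rel a) (map (addn c) s) k = cut (cut_rel a) s k.
Proof. by apply: cut_map => x y _ _; case: a; rewrite /cut_rel /= ltn_add2l. Qed.

Lemma tree_perm_cut l a r :
  cut (cut_rel a) (tree_perm (Node l a r)) (size (tree_perm l)).
Proof.
rewrite /= cut_cat ?size_map //.
rewrite allrel_mapl allrel_mapr.
apply/allrelP => x y /mem_tree_perm x_l /mem_tree_perm y_r.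
by case: a; rewrite /cut_rel /= ?mul1n ?mul0n; lia.
Qed.

Lemma separable_tree_perm t : separable (tree_perm t).
Proof.
elim: t => [|l IHl a r IHr].
  by split=> -[? [? [? [? []]]]] /=; lia.
have addn_mono c (u : seq nat) : {in u &, {mono addn c : x y / x < y}}.
  by move=> x y _ _; rewrite ltn_add2l.
apply: (separable_cat (k := size (tree_perm l))).
- by case: a (tree_perm_cut l a r) => ->; rewrite ?orbT.
- rewrite /= -(size_map (addn (a * size (tree_perm r)))) take_size_cat //.
  exact/(separable_mono (addn_mono _ _)).
- rewrite /= -(size_map (addn (a * size (tree_perm r)))) drop_size_cat //.
  exact/(separable_mono (addn_mono _ _)).
Qed.

Fixpoint des_seq (s : seq nat) : nat :=
  if s is x :: s' then (if s' is y :: _ then y < x else false) + des_seq s' else 0.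

Lemma des_seq_cat (a b : seq nat) : a != [::] -> b != [::] ->
  des_seq (a ++ b) = des_seq a + des_seq b + (head 0 b < last 0 a).
Proof.
case: b => // y b; elim: a => [//|x a IH] _ _.
case: a IH => [|x' a] IH /=; first by rewrite addn0 addnC.
by move: IH; rewrite /= => -> //; rewrite !addnA.
Qed.

Lemma des_seq_addn c (s : seq nat) : des_seq (map (addn c) s) = des_seq s.
Proof. by elim: s => //= x [|y s] -> //=; rewrite ltn_add2l. Qed.

Lemma des_tree_perm t : des_seq (tree_perm t) = n_ominus t.
Proof.
elim: t => //= l IHl a r IHr.
have ne c u : map (addn c) (tree_perm u) != [::].
  by rewrite -size_eq0 size_map size_tree_perm.
rewrite des_seq_cat ?ne // !des_seq_addn IHl IHr; congr (_ + _).
case: (tree_perm l) (ne 0 l) (@mem_tree_perm l) => // x p _ lt_l.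
case: (tree_perm r) (ne 0 r) (@mem_tree_perm r) => // y q _ lt_r.
rewrite /= last_map.
have := lt_l (last x p) (mem_last _ _); have := lt_r y (mem_head _ _).
by case: a; rewrite /= ?mul1n ?mul0n => ? ?; case: ltnP; lia.
Qed.

(** * Injectivity on di-sk trees *)

Lemma opposite_cut_rel a b (s : seq nat) i j : a != b ->
    0 < i < size s -> 0 < j < size s ->
  cut (cut_rel a) s i -> cut (cut_rel b) s j -> False.
Proof.
case: a; case: b => // _ i_s j_s cut_i cut_j.
  exact: opposite_cuts j_s i_s cut_j cut_i.
exact: opposite_cuts i_s j_s cut_i cut_j.
Qed.

Lemma size_tree_perm_node l a r :
  0 < size (tree_perm l) < size (tree_perm (Node l a r)).
Proof. by rewrite !size_tree_perm /=; lia. Qed.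

Lemma disk_cut_max l a r k :
    is_disk (Node l a r) -> 0 < k < size (tree_perm (Node l a r)) ->
  cut (cut_rel a) (tree_perm (Node l a r)) k -> k <= size (tree_perm l).
Proof.
move=> /and3P[_ _ alt] k_s cut_k; rewrite leqNgt; apply/negP => l_k.
move: k_s (cut_drop cut_k (ltnW l_k)) => {cut_k}; rewrite [tree_perm _]/=.
rewrite size_cat !size_map drop_size_cat ?size_map // cut_rel_addn.
case: r alt => [|l' b r'] alt k_s cut_r; first by move: k_s; rewrite /=; lia.
apply: (opposite_cut_rel alt _ (size_tree_perm_node l' b r') cut_r).
  lia.
exact: tree_perm_cut.
Qed.

Lemma tree_perm_node_inj l1 a r1 l2 r2 :
    tree_perm (Node l1 a r1) = tree_perm (Node l2 a r2) ->
    size (tree_perm l1) = size (tree_perm l2) ->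
  tree_perm l1 = tree_perm l2 /\ tree_perm r1 = tree_perm r2.
Proof.
move=> E El; have Er : size (tree_perm r1) = size (tree_perm r2).
  by move/(congr1 size): E; rewrite /= !size_cat !size_map El => /addnI.
move: E => /= /eqP; rewrite El Er eqseq_cat ?size_map // => /andP[/eqP E1 /eqP E2].
by split; [apply: inj_map E1 | apply: inj_map E2]; apply: addnI.
Qed.

Lemma tree_perm_inj t1 t2 :
  is_disk t1 -> is_disk t2 -> tree_perm t1 = tree_perm t2 -> t1 = t2.
Proof.
elim: t1 t2 => [|l1 IHl a1 r1 IHr] [|l2 a2 r2] // d1 d2 E;
  try by move/(congr1 size): E; rewrite !size_tree_perm.
have cut1 := tree_perm_cut l1 a1 r1; have cut2 := tree_perm_cut l2 a2 r2.
have sz1 := size_tree_perm_node l1 a1 r1; have sz2 := size_tree_perm_node l2 a2 r2.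
rewrite E in cut1 sz1.
have ea : a1 = a2.
  by case: (a1 =P a2) => // /eqP a12; case: (opposite_cut_rel a12 sz1 sz2 cut1 cut2).
subst a2.
have el : size (tree_perm l1) = size (tree_perm l2).
  apply/eqP; rewrite eqn_leq (disk_cut_max d2 sz1 cut1) /=.
  by apply: (disk_cut_max d1); rewrite E.
have [El Er] := tree_perm_node_inj E el.
move: d1 d2 => /and3P[dl1 dr1 _] /and3P[dl2 dr2 _].
by rewrite (IHl l2) // (IHr r2).
Qed.

(** * Every separable permutation comes from a di-sk tree *)

Lemma uniq_perm_iota (s : seq nat) m n :
  uniq s -> size s = n -> {subset s <= iota m n} -> perm_eq s (iota m n).
Proof.
move=> us sn sub; apply: uniq_perm => //; first exact: iota_uniq.
by have [] := uniq_min_size us sub; rewrite ?size_iota ?sn.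
Qed.

Lemma perm_iota_cat (a b : seq nat) m :
    perm_eq (a ++ b) (iota m (size a + size b)) -> allrel ltn a b ->
  perm_eq a (iota m (size a)) /\ perm_eq b (iota (m + size a) (size b)).
Proof.
move=> pab ab.
have ua : uniq a by have := perm_uniq pab; rewrite iota_uniq cat_uniq => /and3P[].
have pa : perm_eq a (iota m (size a)).
  apply: uniq_perm_iota => // x xa.
  have := mem_cat x a b; rewrite xa (perm_mem pab) mem_iota /= => /andP[mx x_ab].
  have sub : {subset iota m (x - m).+1 <= a}.
    move=> y; rewrite mem_iota => /andP[my yx].
    have : y \in a ++ b by rewrite (perm_mem pab) mem_iota my /=; lia.
    rewrite mem_cat => /orP[// | yb].
    by have /= := allrelP ab x y xa yb; lia.
  have := uniq_leq_size (iota_uniq m (x - m).+1) sub.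
  rewrite size_iota mem_iota mx /= => le_a.
  by rewrite -(subnKC mx) ltn_add2l.
split=> //.
rewrite -(perm_cat2l (iota m (size a))) -iotaD.
by apply: perm_trans pab; rewrite perm_cat2r perm_sym.
Qed.

Lemma maximal_cut (s : seq nat) : decomposable s ->
  exists a K, [/\ 0 < K < size s, cut (cut_rel a) s K &
                forall k, 0 < k < size s -> cut (cut_rel a) s k -> k <= K].
Proof.
case=> k k_s cut_k.
have [a cut_a] : exists a, cut (cut_rel a) s k.
  by case/orP: cut_k => ?; [exists false | exists true].
pose P K := (0 < K < size s) && cut (cut_rel a) s K.
have exP : exists K, P K by exists k; apply/andP.
have ubP K : P K -> K <= size s by case/andP=> /andP[_ /ltnW].
case: (ex_maxnP exP ubP) => K /andP[K_s cut_K] maxK.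
by exists a, K; split=> // j j_s cut_j; apply: maxK; apply/andP.
Qed.

Lemma perm_iota_cut a (s : seq nat) m k :
    perm_eq s (iota m (size s)) -> cut (cut_rel a) s k -> k <= size s ->
  perm_eq (take k s) (iota (m + a * (size s - k)) k) /\
  perm_eq (drop k s) (iota (m + ~~ a * k) (size s - k)).
Proof.
move=> ps cut_k k_s.
have sz_t : size (take k s) = k by rewrite size_takel.
have sz_d : size (drop k s) = size s - k by rewrite size_drop.
case: a cut_k => cut_k; rewrite /= ?mul1n ?mul0n ?addn0.
  suff [] : perm_eq (drop k s) (iota m (size (drop k s))) /\
            perm_eq (take k s) (iota (m + size (drop k s)) (size (take k s))).
    by rewrite sz_t sz_d.
  apply: perm_iota_cat; last by rewrite allrelC.
  by rewrite perm_catC cat_take_drop sz_t sz_d subnK.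
suff [] : perm_eq (take k s) (iota m (size (take k s))) /\
          perm_eq (drop k s) (iota (m + size (take k s)) (size (drop k s))).
  by rewrite sz_t sz_d.
apply: perm_iota_cat => //.
by rewrite cat_take_drop sz_t sz_d subnKC.
Qed.

Lemma perm_iota1 (s : seq nat) m : perm_eq s (iota m 1) -> s = [:: m].
Proof.
move=> ps; have := perm_size ps; rewrite size_iota.
case: s ps => [|x [|]] //= ps _; congr [:: _].
by have := perm_mem ps x; rewrite !inE eqxx => /esym/eqP.
Qed.

Theorem exists_disk_tree n (s : seq nat) m :
    perm_eq s (iota m n.+1) -> separable s ->
  exists t, [/\ is_disk t, nnodes t = n & map (addn m) (tree_perm t) = s].
Proof.
elim/ltn_ind: n s m => n IH s m ps ss.
have sz : size s = n.+1 by rewrite (perm_size ps) size_iota.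
case: n IH ps sz => [|n] IH ps sz.
  by exists Leaf; split=> //; rewrite (perm_iota1 ps) /= addn0.
have us : uniq s by rewrite (perm_uniq ps) iota_uniq.
have s_gt1 : 1 < size s by rewrite sz.
have [a [K [K_s cut_K maxK]]] := maximal_cut (separable_decomposable us ss s_gt1).
have [pt pd] : perm_eq (take K s) (iota (m + a * (size s - K)) K) /\
               perm_eq (drop K s) (iota (m + ~~ a * K) (size s - K)).
  by apply: perm_iota_cut cut_K _; rewrite ?sz //; lia.
rewrite sz in K_s maxK pt pd.
have {}pt : perm_eq (take K s) (iota (m + a * (n.+2 - K)) K.-1.+1).
  by rewrite prednK //; lia.
have {}pd : perm_eq (drop K s) (iota (m + ~~ a * K) (n.+1 - K).+1).
  by rewrite -subSn //; lia.
have [ta [disk_a nodes_a perm_a]] := IH K.-1 ltac:(lia) _ _ pt (separable_take K ss).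
have [tb [disk_b nodes_b perm_b]] :=
  IH (n.+1 - K) ltac:(lia) _ _ pd (separable_drop K ss).
have size_a : size (tree_perm ta) = K by rewrite size_tree_perm nodes_a; lia.
have size_b : size (tree_perm tb) = n.+2 - K by rewrite size_tree_perm nodes_b; lia.
exists (Node ta a tb); split.
- (* A cut of [drop K s] of the same kind would give a cut of [s] beyond [K]. *)
  rewrite /= disk_a disk_b /=.
  case: tb disk_b nodes_b perm_b size_b => // l' b r' _ _ perm_b size_b.
  apply/negP => /eqP ab; subst b.
  have := cut_dropD cut_K (k := size (tree_perm l')).
  rewrite -perm_b cut_rel_addn => /(_ (tree_perm_cut _ _ _)) cut'.
  have := size_tree_perm_node l' a r'; rewrite size_b => sz'.
  by have := maxK _ _ cut'; lia.
- by rewrite /= nodes_a nodes_b; lia.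
- rewrite -[s](cat_take_drop K) -perm_a -perm_b [tree_perm _]/= map_cat -!map_comp.
  by congr (_ ++ _); apply: eq_map => x /=; rewrite ?size_a ?size_b addnA.
Qed.

Lemma btree_eq_dec : comparable btree.
Proof. rewrite /comparable /decidable; decide equality; exact: Bool.bool_dec. Qed.

HB.instance Definition _ := comparableMixin btree_eq_dec.

Lemma flatten_map_uniq (S T : eqType) (F : S -> seq T) (s : seq S) :
    uniq s -> {in s, forall x, uniq (F x)} ->
    {in s &, forall x y u, u \in F x -> u \in F y -> x = y} ->
  uniq (flatten (map F s)).
Proof.
elim: s => //= x s IH /andP[x_s us] uF disjF.
have uF' : {in s, forall y, uniq (F y)} by move=> y ys; apply: uF; rewrite inE ys orbT.
have disjF' : {in s &, forall y z u, u \in F y -> u \in F z -> y = z}.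
  by move=> y z ys zs; apply: disjF; rewrite inE ?ys ?zs orbT.
rewrite cat_uniq uF ?mem_head // IH // andbT.
apply/hasPn => u /flatten_mapP[y ys u_y]; apply/negP => u_x.
have y_xs : y \in x :: s by rewrite inE ys orbT.
by move: x_s; rewrite (disjF x y (mem_head _ _) y_xs u u_x u_y) ys.
Qed.

Lemma trees_fuelS f k : trees_fuel f.+1 k.+1 =
  flatten [seq flatten [seq flatten [seq [seq Node l a r | r <- trees_fuel f (k - i)]
                                     | a <- [:: false; true]]
                        | l <- trees_fuel f i]
          | i <- iota 0 k.+1].
Proof. by []. Qed.

Lemma nnodes_trees_fuel f k t : t \in trees_fuel f k -> nnodes t = k.
Proof.
elim: f k t => [|f IH] [|k] t; try by rewrite /= ?inE // => /eqP ->.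
rewrite trees_fuelS => /flatten_mapP[i]; rewrite mem_iota => /andP[_ i_k].
move=> /flatten_mapP[l l_i /flatten_mapP[a _ /mapP[r r_ki ->]]] /=.
by rewrite (IH _ _ l_i) (IH _ _ r_ki); lia.
Qed.

Lemma trees_fuel_uniq f k : uniq (trees_fuel f k).
Proof.
elim: f k => [|f IH] [|k] //; rewrite trees_fuelS.
apply: flatten_map_uniq => [|i _|i j _ _ t].
- exact: iota_uniq.
- apply: flatten_map_uniq => // [l _|l1 l2 _ _ t].
    apply: flatten_map_uniq => // [a _|a b _ _ t /mapP[r1 _ ->] /mapP[r2 _ []] //].
    by rewrite map_inj_uniq // => r1 r2 [].
  by move=> /flatten_mapP[a1 _ /mapP[r1 _ ->]] /flatten_mapP[a2 _ /mapP[r2 _ []]].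
move=> /flatten_mapP[l1 l1_i /flatten_mapP[a1 _ /mapP[r1 _ ->]]].
move=> /flatten_mapP[l2 l2_j /flatten_mapP[a2 _ /mapP[r2 _ [e _ _]]]].
by rewrite -(nnodes_trees_fuel l1_i) -(nnodes_trees_fuel l2_j) e.
Qed.

Lemma trees_fuel_complete f t : nnodes t <= f -> t \in trees_fuel f (nnodes t).
Proof.
elim: f t => [|f IH] [|l a r] t_f; rewrite [nnodes _]/= in t_f *.
- by rewrite /= inE.
- by lia.
- by rewrite /= inE.
rewrite trees_fuelS.
apply/flatten_mapP; exists (nnodes l); first by rewrite mem_iota; lia.
apply/flatten_mapP; exists l; first by apply: IH; lia.
apply/flatten_mapP; exists a; first by case: a.
by apply/mapP; exists r; rewrite // addKn; apply: IH; lia.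
Qed.

Lemma mem_disk_trees n t : (t \in disk_trees n.+1) = is_disk t && (nnodes t == n).
Proof.
rewrite mem_filter; case: (is_disk t) => //=.
by apply/idP/eqP => [/nnodes_trees_fuel | <-] //; exact: trees_fuel_complete.
Qed.

Lemma disk_trees_uniq n : uniq (disk_trees n).
Proof. exact/filter_uniq/trees_fuel_uniq. Qed.

Definition perm_seq n (p : 'S_n) : seq nat := [seq val (p i) | i <- enum 'I_n].

Lemma size_perm_seq n (p : 'S_n) : size (perm_seq p) = n.
Proof. by rewrite size_map size_enum_ord. Qed.

Lemma nth_perm_seq n (p : 'S_n) (i : 'I_n) : nth 0 (perm_seq p) i = p i.
Proof. by rewrite (nth_map i) ?size_enum_ord // nth_ord_enum. Qed.

Lemma perm_seq_iota n (p : 'S_n) : perm_eq (perm_seq p) (iota 0 n).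
Proof.
apply: uniq_perm_iota; last by move=> _ /mapP[i _ ->]; rewrite mem_iota /=.
  by rewrite map_inj_uniq ?enum_uniq // => i j /val_inj/perm_inj.
exact: size_perm_seq.
Qed.

Lemma perm_seq_inj n : injective (@perm_seq n).
Proof.
move=> p q pq; apply/permP => i; apply: val_inj.
by rewrite /= -!nth_perm_seq pq.
Qed.

Lemma perm_seq_onto n (s : seq nat) :
  perm_eq s (iota 0 n) -> exists p : 'S_n, perm_seq p = s.
Proof.
move=> ps; have us : uniq s by rewrite (perm_uniq ps) iota_uniq.
have sz : size s = n by rewrite (perm_size ps) size_iota.
have lt_n (i : 'I_n) : nth 0 s i < n.
  by rewrite -[_ < n](mem_iota 0) -(perm_mem ps) mem_nth ?sz.
pose g (i : 'I_n) := Ordinal (lt_n i).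
have g_inj : injective g.
  by move=> i j /(congr1 val)/eqP; rewrite /= nth_uniq ?sz // => /eqP/val_inj.
exists (perm g_inj); rewrite /perm_seq (eq_map (g := fun i : 'I_n => nth 0 s i)).
  by rewrite (map_comp (nth 0 s) val) val_enum_ord -sz; exact: mkseq_nth.
by move=> i; rewrite permE.
Qed.

Lemma occurs_perm_seqP n (p : 'S_n) (R : nat -> nat -> nat -> nat -> bool) :
  reflect (occurs R (perm_seq p))
    [exists a : 'I_n, exists b : 'I_n, exists c : 'I_n, exists d : 'I_n,
      [&& a < b, b < c, c < d & R (p a) (p b) (p c) (p d)]].
Proof.
apply: (iffP existsP) => [[a /existsP[b /existsP[c /existsP[d]]]] | ].
  case/and4P=> ab bc cd Rabcd; exists a, b, c, d.
  by rewrite size_perm_seq !nth_perm_seq.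
case=> a [b [c [d []]]]; rewrite size_perm_seq => ab bc cd dn.
have [an bn cn] : [/\ a < n, b < n & c < n] by split; lia.
rewrite -[a]/(val (Ordinal an)) -[b]/(val (Ordinal bn)) -[c]/(val (Ordinal cn)).
rewrite -[d]/(val (Ordinal dn)) !nth_perm_seq => Rabcd.
exists (Ordinal an); apply/existsP; exists (Ordinal bn); apply/existsP.
by exists (Ordinal cn); apply/existsP; exists (Ordinal dn); apply/and4P.
Qed.

Lemma avoids_separable n (p : 'S_n) : avoids_2413_3142 p <-> separable (perm_seq p).
Proof.
have P2413 := occurs_perm_seqP p pat2413; have P3142 := occurs_perm_seqP p pat3142.
split=> [/andP[/(elimN P2413) ? /(elimN P3142) ?] // | [no2413 no3142]].
by apply/andP; split; [apply/(introN P2413) | apply/(introN P3142)].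
Qed.

Lemma des_seq_count (s : seq nat) : des_seq s =
  count (fun i => (i.+1 < size s) && (nth 0 s i.+1 < nth 0 s i)) (iota 0 (size s)).
Proof.
elim: s => [//|x s IH]; rewrite [size _]/= -addn1 addnC iotaD /= add0n IH.
congr (_ + _); first by case: s {IH}.
by rewrite -[1]addn0 iotaDl count_map; apply: eq_count => i /=; rewrite add1n.
Qed.

Lemma des_perm_seq n (p : 'S_n) : des p = des_seq (perm_seq p).
Proof.
rewrite des_seq_count size_perm_seq /des -sum1dep_card.
pose P k := (k.+1 < n) && (nth 0 (perm_seq p) k.+1 < nth 0 (perm_seq p) k).
rewrite (eq_bigl (fun i : 'I_n => P i)) => [|i].
  by rewrite -(big_mkord P (fun _ => 1)) sum1_count /index_iota subn0.
rewrite /P; apply/existsP/andP => [[j /andP[/eqP ij j_i]] | [i_n lt_i]].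
  by rewrite -ij ltn_ord !nth_perm_seq.
exists (Ordinal i_n); rewrite eqxx /=.
by rewrite -[i.+1]/(val (Ordinal i_n)) !nth_perm_seq in lt_i.
Qed.

Lemma perm_separable_disk_trees n :
  perm_eq [seq perm_seq p | p <- index_enum {perm 'I_n.+1} & avoids_2413_3142 p]
          (map tree_perm (disk_trees n.+1)).
Proof.
apply: uniq_perm.
- by rewrite map_inj_uniq ?filter_uniq ?index_enum_uniq //; exact: perm_seq_inj.
- rewrite map_inj_in_uniq ?disk_trees_uniq // => t1 t2.
  by rewrite !mem_disk_trees => /andP[d1 _] /andP[d2 _]; exact: tree_perm_inj.
move=> s; apply/mapP/mapP => [[p] | [t]].
  rewrite mem_filter => /andP[/avoids_separable sep_p _] ->.
  have [t [disk_t nodes_t perm_t]] := exists_disk_tree (perm_seq_iota p) sep_p.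
  exists t; first by rewrite mem_disk_trees disk_t nodes_t /=.
  by rewrite -perm_t (eq_map add0n) map_id.
rewrite mem_disk_trees => /andP[disk_t /eqP nodes_t] ->; subst n.
have [p perm_p] := perm_seq_onto (tree_perm_iota t).
exists p => //; rewrite mem_filter mem_index_enum andbT.
by apply/avoids_separable; rewrite perm_p; exact: separable_tree_perm.
Qed.

Local Open Scope ring_scope.

Theorem corollary2p16 (n : nat) : (1 <= n)%N ->
  \sum_(p : 'S_n | avoids_2413_3142 p) ('X^(des p) : {poly int})
  = \sum_(T <- disk_trees n) 'X^(n_ominus T).
Proof.
case: n => [//|n] _.
rewrite -big_filter (eq_bigr (fun p => 'X^(des_seq (perm_seq p)))) => [|p _].
  rewrite (eq_bigr (fun t => 'X^(des_seq (tree_perm t)))) => [|t _].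
    rewrite -(big_map (@perm_seq n.+1) xpredT (fun s => 'X^(des_seq s))).
    rewrite -(big_map tree_perm xpredT (fun s => 'X^(des_seq s))).
    exact/perm_big/perm_separable_disk_trees.
  by rewrite des_tree_perm.
by rewrite des_perm_seq.
Qed.
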